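(* Let $Q$ be a sketch with $d$ parameter holes, $z$ a trajectory, $v\in\mathbb{R}^d$, and $u\in\mathbb{R}^d_{>0}$ (all components positive). Let $t=[\![Q]\!]^{q}_{v,u}(z)\in\mathbb{R}\cup\{\pm\infty\}$. Then $t\cdot u+v$ is a boundary parameter of $z$ for $Q$, where by convention $\infty\cdot u+v:=\top$ and $(-\infty)\cdot u+v:=\bot$.
   Context: Fix a set $\mathcal{X}$ of states. A trajectory is a finite sequence $z=(x_0,\dots,x_{n-1})\in\mathcal{X}^*$ of length $n$; for $0\le i\le j\le n$, $z_{i:j}=(x_i,\dots,x_{j-1})$ (empty if $i=j$). Fix predicates of two kinds: a non-parametric predicate $\varphi$ has $\mathsf{sat}_\varphi:\mathcal{X}^*\to\{0,1\}$; a parametric predicate $\varphi$ has a bounded scoring function $\iota_\varphi:\mathcal{X}^*\to\mathbb{R}$. Sketches are generated by $Q::=\varphi_{??i}\mid\varphi\mid Q\,;\,Q\mid Q^k\mid Q\wedge Q$, where $\varphi_{??i}$ is a parametric predicate with a parameter hole labelled $i\in\{1,\dots,d\}$ ($d$ = number of parameter holes), $\varphi$ in the second case is non-parametric, and $Q^k$ ($k\ge1$) is $k$-fold sequencing $Q\,;\cdots;\,Q$. For $\theta\in\mathbb{R}^d$, $Q_\theta$ fills hole $??i$ with $\theta_i$, with Boolean semantics on $z$ of length $n$: $[\![\varphi_{\theta_i}]\!](z)=\mathbb{1}(\iota_\varphi(z)\ge\theta_i)$; $[\![\varphi]\!](z)=\mathsf{sat}_\varphi(z)$; $[\![Q_1\wedge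 Q_2]\!](z)=[\![Q_1]\!](z)\wedge[\![Q_2]\!](z)$; $[\![Q_1\,;\,Q_2]\!](z)=\bigvee_{k=0}^{n}([\![Q_1]\!](z_{0:k})\wedge[\![Q_2]\!](z_{k:n}))$. Quantitative semantics (values in $\mathbb{R}\cup\{\pm\infty\}$), for $v\in\mathbb{R}^d$, $u\in\mathbb{R}^d_{>0}$ and $z$ of length $n$: $[\![\varphi_{??i}]\!]^q_{v,u}(z)=(\iota_\varphi(z)-v_i)/u_i$; $[\![\varphi]\!]^q_{v,u}(z)=\infty$ if $\mathsf{sat}_\varphi(z)=1$ and $-\infty$ if $\mathsf{sat}_\varphi(z)=0$; $[\![Q_1\wedge Q_2]\!]^q_{v,u}(z)=\min\{[\![Q_1]\!]^q_{v,u}(z),[\![Q_2]\!]^q_{v,u}(z)\}$; $[\![Q_1\,;\,Q_2]\!]^q_{v,u}(z)=\max_{0\le k\le n}\min\{[\![Q_1]\!]^q_{v,u}(z_{0:k}),[\![Q_2]\!]^q_{v,u}(z_{k:n})\}$. For $x,y\in(\mathbb{R}\cup\{\pm\infty\})^d$, $\lfloor x,y\rceil=\{w\in\mathbb{R}^d:x_i<w_i\le y_i\ \forall i\}$. A boundary parameter of $z$ for $Q$ is $\theta\in\mathbb{R}^d\cup\{\bot,\top\}$ such that one of: (i) $\theta\in\mathbb{R}^d$, $[\![Q_\theta]\!](z)=1$, and $[\![Q_{\theta'}]\!](z)=0$ for all $\theta'\in\lfloor\theta,(\infty,\dots,\infty)\rceil$; (ii) $\theta=\bot$ and $[\![Q_{\theta'}]\!](z)=0$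 for all $\theta'\in\mathbb{R}^d$; (iii) $\theta=\top$ and $[\![Q_{\theta'}]\!](z)=1$ for all $\theta'\in\mathbb{R}^d$. *)

From HB Require Import structures.
From mathcomp Require Import all_boot all_order all_algebra.
From mathcomp Require Import all_classical all_reals ereal.
Set Implicit Arguments. Unset Strict Implicit. Unset Printing Implicit Defensive.
Import Order.TTheory GRing.Theory Num.Theory.
Local Open Scope ring_scope.
Local Open Scope ereal_scope.

Section Sketches.
Variables (X : Type) (R : realType) (d : nat).

(* Holes are labelled by 'I_d (label i+1 in the paper is i here).
   SPar i iota   : parametric predicate with scoring function iota and hole ??i
   SNon sat      : non-parametric predicate
   SSeq Q1 Q2    : Q1 ; Q2
   SPow k Q      : Q^k (k-fold sequencing, k >= 1 required by wf_sketch)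
   SAnd Q1 Q2    : Q1 /\ Q2 *)
Inductive sketch :=
| SPar of 'I_d & (seq X -> R)
| SNon of (seq X -> bool)
| SSeq of sketch & sketch
| SPow of nat & sketch
| SAnd of sketch & sketch.

Fixpoint wf_sketch (Q : sketch) : Prop :=
  match Q with
  | SPar _ iota => exists M : R, forall z, (`|iota z| <= M)%R
  | SNon _ => True
  | SSeq Q1 Q2 => wf_sketch Q1 /\ wf_sketch Q2
  | SPow k Q1 => (1 <= k)%N /\ wf_sketch Q1
  | SAnd Q1 Q2 => wf_sketch Q1 /\ wf_sketch Q2
  end.

Definition seqb (f g : seq X -> bool) (z : seq X) : bool :=
  [exists k : 'I_(size z).+1, f (take k z) && g (drop k z)].

Fixpoint bsem (Q : sketch) (theta : 'I_d -> R) (z : seq X) : bool :=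
  match Q with
  | SPar i iota => (theta i <= iota z)%R
  | SNon sat => sat z
  | SSeq Q1 Q2 => seqb (bsem Q1 theta) (bsem Q2 theta) z
  | SPow k Q1 => iter k.-1 (seqb (bsem Q1 theta)) (bsem Q1 theta) z
  | SAnd Q1 Q2 => bsem Q1 theta z && bsem Q2 theta z
  end.

Definition seqq (f g : seq X -> \bar R) (z : seq X) : \bar R :=
  \big[maxe/-oo]_(k < (size z).+1) mine (f (take k z)) (g (drop k z)).

Fixpoint qsem (Q : sketch) (v u : 'I_d -> R) (z : seq X) : \bar R :=
  match Q with
  | SPar i iota => ((iota z - v i) / u i)%:E
  | SNon sat => if sat z then +oo else -oo
  | SSeq Q1 Q2 => seqq (qsem Q1 v u) (qsem Q2 v u) z
  | SPow k Q1 => iter k.-1 (seqq (qsem Q1 v u)) (qsem Q1 v u) z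
  | SAnd Q1 Q2 => mine (qsem Q1 v u z) (qsem Q2 v u z)
  end.

Inductive bparam :=
| BReal of ('I_d -> R)
| BBot
| BTop.

Definition is_boundary (Q : sketch) (z : seq X) (b : bparam) : Prop :=
  match b with
  | BReal theta =>
      bsem Q theta z /\
      forall theta' : 'I_d -> R, (forall i, theta i < theta' i)%R -> ~~ bsem Q theta' z
  | BBot => forall theta' : 'I_d -> R, ~~ bsem Q theta' z
  | BTop => forall theta' : 'I_d -> R, bsem Q theta' z
  end.

Definition scale_shift (t : \bar R) (v u : 'I_d -> R) : bparam :=
  match t with
  | EFin r => BReal (fun i => (r * u i + v i)%R)
  | +oo => BTop
  | -oo => BBot
  end.

End Sketches.

(* Boolean satisfaction of Q_theta is antitone in theta, and along the line
   theta = r u + v it is a threshold in r: by induction on Q, Q_{r u + v}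
   holds exactly when r <= [[Q]]^q_{v,u}(z), because min and max commute
   with the threshold test. Any theta lies between two points of this line,
   namely r u + v for r the least and the largest of the (theta_i - v_i)/u_i;
   comparing t = [[Q]]^q_{v,u}(z) with these two values gives each of the
   three boundary cases. *)
From HB Require Import structures.
From mathcomp Require Import all_boot all_order all_algebra.
From mathcomp Require Import all_classical all_reals ereal.
Set Implicit Arguments. Unset Strict Implicit. Unset Printing Implicit Defensive.
Import Order.TTheory GRing.Theory Num.Theory.
Local Open Scope ring_scope.

Section Semantics.
Variables (X : Type) (R : realType) (d : nat).

Lemma seqb_mono (f1 f2 g1 g2 : seq X -> bool) (z : seq X) :
  (forall w, f1 w -> f2 w) -> (forall w, g1 w -> g2 w) ->
  seqb f1 g1 z -> seqb f2 g2 z.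
Proof.
move=> f12 g12 /existsP[k /andP[fk gk]]; apply/existsP; exists k.
by rewrite f12 ?g12.
Qed.

Lemma seqb_threshold (r : R) (f g : seq X -> bool) (F G : seq X -> \bar R)
    (z : seq X) :
  (forall w, f w = (r%:E <= F w)%E) -> (forall w, g w = (r%:E <= G w)%E) ->
  seqb f g z = (r%:E <= seqq F G z)%E.
Proof.
move=> fF gG; apply/existsP/idP => [[k /andP[fk gk]]|].
  by apply: le_trans (le_bigmax _ _ k); rewrite le_min -fF -gG fk gk.
apply: contraPP => /forallNP none; apply/negP; rewrite -ltNge.
apply/bigmax_ltP; split=> [|k _]; first exact: ltNyr.
by rewrite ltNge le_min -fF -gG; apply/negP; apply: none.
Qed.

Lemma bsem_antitone (Q : sketch X R d) (theta1 theta2 : 'I_d -> R) (z : seq X) :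
  (forall i, theta1 i <= theta2 i) -> bsem Q theta2 z -> bsem Q theta1 z.
Proof.
move=> le12; elim: Q z => [i iota|sat|Q1 IH1 Q2 IH2|k Q1 IH|Q1 IH1 Q2 IH2] z /=.
- exact: le_trans.
- by [].
- exact: seqb_mono.
- by elim: k.-1 z => [|n IHn] z /=; [apply: IH | apply: seqb_mono].
- by case/andP => /IH1 -> /IH2 ->.
Qed.

Variables (v u : 'I_d -> R).
Hypothesis u_gt0 : forall i, 0 < u i.

Definition line_param (r : R) : 'I_d -> R := fun i => r * u i + v i.

Definition line_coord (theta : 'I_d -> R) (i : 'I_d) : R := (theta i - v i) / u i.

Lemma line_param_le (r : R) (theta : 'I_d -> R) (i : 'I_d) :
  (line_param r i <= theta i) = (r <= line_coord theta i).
Proof. by rewrite /line_param /line_coord ler_pdivlMr // lerBrDr. Qed.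

Lemma line_param_lt (r : R) (theta : 'I_d -> R) (i : 'I_d) :
  (line_param r i < theta i) = (r < line_coord theta i).
Proof. by rewrite /line_param /line_coord ltr_pdivlMr // ltrBrDr. Qed.

Lemma le_line_param (r : R) (theta : 'I_d -> R) (i : 'I_d) :
  (theta i <= line_param r i) = (line_coord theta i <= r).
Proof. by rewrite /line_param /line_coord ler_pdivrMr // lerBlDr. Qed.

Lemma bsem_line_param (Q : sketch X R d) (r : R) (z : seq X) :
  bsem Q (line_param r) z = (r%:E <= qsem Q v u z)%E.
Proof.
elim: Q z => [i iota|sat|Q1 IH1 Q2 IH2|k Q1 IH|Q1 IH1 Q2 IH2] z /=.
- by rewrite lee_fin ler_pdivlMr // lerBrDr.
- by case: (sat z); rewrite ?leey // leNgt ltNyr.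
- exact: seqb_threshold.
- by elim: k.-1 z => [|n IHn] z /=; [apply: IH | apply: seqb_threshold].
- by rewrite le_min IH1 IH2.
Qed.

Lemma bsem_le_qsem (Q : sketch X R d) (theta : 'I_d -> R) (z : seq X) (r0 : R) :
  bsem Q theta z ->
  ((\big[Num.min/r0]_i line_coord theta i)%:E <= qsem Q v u z)%E.
Proof.
move=> Qtheta; rewrite -bsem_line_param; apply: bsem_antitone Qtheta => i.
by rewrite line_param_le; apply: bigmin_le.
Qed.

Lemma qsem_ge_bsem (Q : sketch X R d) (theta : 'I_d -> R) (z : seq X) (r0 : R) :
  ((\big[Num.max/r0]_i line_coord theta i)%:E <= qsem Q v u z)%E ->
  bsem Q theta z.
Proof.
rewrite -bsem_line_param; apply: bsem_antitone => i.
by rewrite le_line_param; apply: le_bigmax.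
Qed.

End Semantics.

Theorem theorem3 (X : Type) (R : realType) (d : nat) (Q : sketch X R d)
    (z : seq X) (v u : 'I_d -> R) :
  wf_sketch Q -> (forall i, 0 < u i) ->
  is_boundary Q z (scale_shift (qsem Q v u z) v u).
Proof.
move=> _ u_gt0; case qsemE: (qsem Q v u z) => [t| |] /=.
- split; first by rewrite -/(line_param v u t) bsem_line_param ?qsemE.
  (* The unit t + 1 of the minimum keeps the argument valid when d = 0. *)
  move=> theta gt_theta; apply/negP => /(bsem_le_qsem v u_gt0 (t + 1)).
  rewrite qsemE lee_fin leNgt => /negP; apply.
  apply: lt_bigmin => [|i _]; first by rewrite ltrDl.
  by rewrite -line_param_lt //; apply: gt_theta.
- by move=> theta; apply: (qsem_ge_bsem (v := v) u_gt0 (r0 := 0)); rewrite qsemE leey.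
- move=> theta; apply/negP => /(bsem_le_qsem v u_gt0 0).
  by rewrite qsemE leeNy_eq.
Qed.
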